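(* Let $F=\{T_1,\dots,T_n\}$ be a finite family of reduction operators relative to a well-ordered set $(G,<)$. Then \[\mathrm{lt}(\mathrm{syz}(F))=\{e_{i,g_0}\mid 2\le i\le n\ \text{and}\ g_0\in\mathrm{red}(U_{i-1}\vee T_i)\},\] where $U_{i-1}=T_1\wedge\dots\wedge T_{i-1}$.
   Context: Let $\mathbb{K}$ be a field, $(G,<)$ a well-ordered set and $\mathbb{K}G$ the vector space with basis $G$. For $v\neq0$, $\mathrm{lt}(v)$ is the greatest element of $G$ appearing with nonzero coefficient in $v$. Extend $<$ to $\mathbb{K}G$: $u<v$ if $u=0$ and $v\neq0$, or if $\mathrm{lt}(u)<\mathrm{lt}(v)$; $u\le v$ means $u<v$ or $u=v$. A reduction operator is an idempotent linear endomorphism $T$ of $\mathbb{K}G$ with $T(g)\le g$ for all $g\in G$; $\mathrm{red}(T)=\{g\in G\mid T(g)\neq g\}$. For every subspace $V$ there is a unique reduction operator $\ker^{-1}(V)$ with kernel $V$; $T\wedge T'=\ker^{-1}(\ker T+\ker T')$, $T\vee T'=\ker^{-1}(\ker T\cap\ker T')$, and $T_1\wedge\dots\wedge T_k=\ker^{-1}(\sum\ker T_j)$; $\wedge F=T_1\wedge\dots\wedge T_n$. Let $\mathbf{ker}(F)=\ker T_1\times\dots\times\ker T_n$, $\pi_F(v_1,\dots,v_n)=v_1+\dots+v_n\in\ker(\wedge F)$ and $\mathrm{syz}(F)=\ker\pi_F$. For $g\in\mathrm{red}(T_i)$, $e_{i,g}$ is the tuple with $g-T_i(g)$ at position $i$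 and $0$ elsewhere; these form a basis of $\mathbf{ker}(F)$, well-ordered by $e_{i,g}\sqsubset e_{i',g'}$ iff $i<i'$, or $i=i'$ and $g<g'$. The leading term of a nonzero element of $\mathbf{ker}(F)$ is the $\sqsubset$-greatest $e_{i,g}$ appearing with nonzero coefficient in it, and $\mathrm{lt}(\mathrm{syz}(F))$ is the set of leading terms of nonzero elements of $\mathrm{syz}(F)$. *)

(* with multinomials' monoid algebra {malg K[G]} as the
   K-vector space with basis G (finitely supported functions G -> K). *)
From HB Require Import structures.
From mathcomp Require Import all_boot all_order all_algebra.
From mathcomp Require Import finmap.
From mathcomp.multinomials Require Import monalg.
From Stdlib Require Import ClassicalEpsilon.

Set Implicit Arguments.
Unset Strict Implicit.
Unset Printing Implicit Defensive.

Import Order.TTheory GRing.Theory.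
Local Open Scope ring_scope.

Section ReductionOperators.
Context {K : fieldType} {d : Order.disp_t} {G : orderType d}.

Notation KG := {malg K[G]}.

(* lt(v): the greatest element of G with nonzero coefficient in v
   (None for v = 0). *)
Definition lead (v : KG) : option G :=
  foldr (fun g o => Some (if o is Some h then Order.max g h else g))
        None (msupp v).

Definition vlt (u v : KG) : bool :=
  ((u == 0) && (v != 0)) ||
  match lead u, lead v with
  | Some a, Some b => (a < b)%O
  | _, _ => false
  end.

Definition vle (u v : KG) : bool := vlt u v || (u == v).

Definition is_reduction (T : KG -> KG) : Prop :=
  [/\ (forall (a : K) (u v : KG), T (a *: u + v) = a *: T u + T v),
      (forall v, T (T v) = T v) &
      (forall g : G, vle (T << g >>) << g >>)].

Definition red (T : KG -> KG) (g : G) : bool := T << g >> != << g >>.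

(* ker^{-1}(V): the (unique) reduction operator whose kernel is V. *)
Definition ker_inv (P : KG -> Prop) : KG -> KG :=
  epsilon (inhabits id)
    (fun T => is_reduction T /\ forall v, T v = 0 <-> P v).

(* T /\ T' = ker^{-1}(ker T + ker T'),  T \/ T' = ker^{-1}(ker T cap ker T') *)
Definition rmeet (T T' : KG -> KG) : KG -> KG :=
  ker_inv (fun v => exists u u', T u = 0 /\ T' u' = 0 /\ v = u + u').
Definition rjoin (T T' : KG -> KG) : KG -> KG :=
  ker_inv (fun v => T v = 0 /\ T' v = 0).

(* T_1 /\ ... /\ T_k = ker^{-1}(ker T_1 + ... + ker T_k),
   for a family indexed by 1..n (T : nat -> _). *)
Definition rmeet_upto (T : nat -> KG -> KG) (k : nat) : KG -> KG :=
  ker_inv (fun v => exists w : nat -> KG,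
             (forall j, (1 <= j <= k)%N -> T j (w j) = 0) /\
             v = \sum_(1 <= j < k.+1) w j).

(* Elements of ker(F) = ker T_1 x ... x ker T_n are tuples w, encoded as
   w : nat -> KG, with only the entries 1..n relevant. *)
Definition in_kerF (n : nat) (T : nat -> KG -> KG) (w : nat -> KG) : Prop :=
  forall j, (1 <= j <= n)%N -> T j (w j) = 0.

Definition nonzero_tuple (n : nat) (w : nat -> KG) : Prop :=
  exists j, (1 <= j <= n)%N /\ w j != 0.

Definition in_syz (n : nat) (T : nat -> KG -> KG) (w : nat -> KG) : Prop :=
  in_kerF n T w /\ \sum_(1 <= j < n.+1) w j = 0.

(* c gives the coordinates of w in the basis (e_{j,h}): the coefficient
   of e_{j,h} is (c j)@_h, only h in red(T_j) are used, and
   w_j = sum_h (c j)@_h (h - T_j(h)). *)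
Definition kerF_coords (n : nat) (T : nat -> KG -> KG) (w c : nat -> KG)
  : Prop :=
  forall j, (1 <= j <= n)%N ->
    (forall h, h \in msupp (c j) -> red (T j) h) /\
    w j = \sum_(h <- msupp (c j)) (c j)@_h *: (<< h >> - T j << h >>).

(* e_{i,g} is the leading term of w (for the order
   e_{j,h} [< e_{i,g} iff j < i, or j = i and h < g). *)
Definition kerF_lt (n : nat) (T : nat -> KG -> KG) (w : nat -> KG)
  (i : nat) (g : G) : Prop :=
  exists c : nat -> KG,
    [/\ kerF_coords n T w c, (1 <= i <= n)%N, (c i)@_g != 0 &
        forall j h, (1 <= j <= n)%N -> (c j)@_h != 0 ->
          (j < i)%N \/ (j = i /\ (h <= g)%O)].

Definition in_lt_syz (n : nat) (T : nat -> KG -> KG) (i : nat) (g : G)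
  : Prop :=
  exists w, [/\ in_syz n T w, nonzero_tuple n w & kerF_lt n T w i g].

End ReductionOperators.

From HB Require Import structures.
From mathcomp Require Import all_boot all_order all_algebra.
From mathcomp Require Import finmap.
From mathcomp.multinomials Require Import monalg.
From mathcomp Require Import zify.
From Stdlib Require Import ClassicalEpsilon Classical.

Set Implicit Arguments.
Unset Strict Implicit.
Unset Printing Implicit Defensive.
Import Order.TTheory GRing.Theory.
Local Open Scope ring_scope.

(* A reduction operator T is determined by its kernel: red(T) is the set
   lt(ker T) of leading terms of elements of ker T, and ker T has the
   triangular basis h - T(h), h in red(T), in which the coordinates of an
   element are its own coefficients at red(T).  Since G is well-ordered,
   ker^{-1}(V) exists: it maps u to its normal form modulo V, the unique u' in
   u + V whose support avoids lt(V).  Hence red(U_{i-1} \/ T_i) is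
   lt((ker T_1 + ... + ker T_{i-1}) ∩ ker T_i).
   If a syzygy w has leading term e_{i,g}, then w_j = 0 for j > i, so
   w_i = -(w_1 + ... + w_{i-1}) lies in this intersection, with leading term g
   by triangularity (for i = 1 this forces w_1 = 0, a contradiction).
   Conversely, if v = w_1 + ... + w_{i-1} lies in ker T_i and has leading
   term g, then (w_1, ..., w_{i-1}, -v, 0, ..., 0) is a syzygy with leading
   term e_{i,g}. *)

Section LeadingTerms.
Context {K : fieldType} {d : Order.disp_t} {G : orderType d}.
Notation KG := {malg K[G]}.
Implicit Types (v x : KG) (g h k m : G).

Definition is_lead v m :=
  m \in msupp v /\ forall k, k \in msupp v -> (k <= m)%O.

Lemma is_lead_foldr_max (s : seq G) m :
  foldr (fun g o => Some (if o is Some h then Order.max g h else g)) None s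
    = Some m -> m \in s /\ forall k, k \in s -> (k <= m)%O.
Proof.
elim: s m => [//|a s IH] m /= [<-].
case E: (foldr _ _ s) => [h|].
  have [hs hmax] := IH h E.
  split; first by rewrite /Order.max; case: ifP => _; rewrite inE ?eqxx ?hs ?orbT.
  by move=> k; rewrite inE le_max => /orP[/eqP->|/hmax->]; rewrite ?lexx ?orbT.
by case: s {IH} E => // _; split=> [|k]; rewrite inE // => /eqP->.
Qed.

Lemma lead_None v : lead v = None -> v = 0.
Proof.
move=> E; have supp_nil : (msupp v : seq G) = [::].
  by move: E; rewrite /lead; case: (msupp v : seq G).
apply/malgP => k; rewrite mcoeff0 mcoeff_outdom //.
by rewrite -[_ \in _]/(k \in (msupp v : seq G)) supp_nil.
Qed.

Lemma leadP v m : lead v = Some m <-> is_lead v m.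
Proof.
split=> [|[mv mmax]]; first exact: is_lead_foldr_max.
case E: (lead v) => [a|]; last by rewrite (lead_None E) msupp0 in mv.
have [av amax] := is_lead_foldr_max E.
by rewrite (@le_anti _ _ a m) ?amax ?mmax.
Qed.

Lemma is_lead_exists v : v != 0 -> exists m, is_lead v m.
Proof.
case E: (lead v) => [m|]; first by exists m; apply/leadP.
by rewrite (lead_None E) eqxx.
Qed.

Lemma monalgEscale x : x = \sum_(h <- msupp x) x@_h *: << h >>.
Proof.
rewrite {1}(monalgE x); apply: eq_bigr => h _.
by apply/malgP => k; rewrite mcoeffZ !mcoeffU mulr_natr.
Qed.

Lemma msuppU_eq (c : K) m k : k \in msupp << c *g m >> -> k = m.
Proof. by move/(fsubsetP msuppU_le); rewrite inE => /eqP. Qed.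

Lemma is_lead_basis g : is_lead << g >> g.
Proof. by split=> [|k /msuppU_eq->]; rewrite ?msuppU ?oner_eq0 ?inE. Qed.

Lemma msupp_lt x m : (forall k, k \in msupp x -> (k <= m)%O) -> x@_m = 0 ->
  forall k, k \in msupp x -> (k < m)%O.
Proof.
move=> x_le xm0 k kx; rewrite lt_neqAle x_le // andbT.
by apply: contraTneq kx => ->; rewrite -mcoeff_neq0 xm0 eqxx.
Qed.

Lemma vlt_basis x g :
  vlt x << g >> <-> forall k, k \in msupp x -> (k < g)%O.
Proof.
rewrite /vlt (proj2 (leadP _ _) (is_lead_basis g)) monalgU_eq0 oner_neq0 andbT.
have [->|/is_lead_exists [m xm]] := eqVneq x 0; first by rewrite msupp0.
rewrite (proj2 (leadP _ _) xm) /=; split=> [mg k /xm.2 km | /(_ m xm.1) //].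
exact: le_lt_trans km mg.
Qed.

End LeadingTerms.

Section ReductionOperator.
Context {K : fieldType} {d : Order.disp_t} {G : orderType d}.
Notation KG := {malg K[G]}.
Implicit Types (u v x c : KG) (g h k m : G).
Variable T : KG -> KG.
Hypothesis hT : is_reduction T.

Lemma reductionZD a u v : T (a *: u + v) = a *: T u + T v.
Proof. by case: hT. Qed.

Lemma reduction0 : T 0 = 0.
Proof. by have := reductionZD (-1) 0 0; rewrite scaler0 addr0 scaleN1r addNr. Qed.

Lemma reductionD u v : T (u + v) = T u + T v.
Proof. by rewrite -[u]scale1r reductionZD !scale1r. Qed.

Lemma reductionZ a u : T (a *: u) = a *: T u.
Proof. by rewrite -[a *: u]addr0 reductionZD reduction0 addr0. Qed.

Lemma reductionN u : T (- u) = - T u.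
Proof. by rewrite -scaleN1r reductionZ scaleN1r. Qed.

Lemma reductionB u v : T (u - v) = T u - T v.
Proof. by rewrite reductionD reductionN. Qed.

Lemma reduction_sum (I : Type) (s : seq I) (F : I -> KG) :
  T (\sum_(i <- s) F i) = \sum_(i <- s) T (F i).
Proof.
elim: s => [|a s IH]; first by rewrite !big_nil reduction0.
by rewrite !big_cons reductionD IH.
Qed.

Lemma msupp_reduction_lt g k : red T g -> k \in msupp (T << g >>) -> (k < g)%O.
Proof.
case: hT => _ _ /(_ g); rewrite /vle => + Tg; rewrite (negbTE Tg) orbF.
by move/vlt_basis; apply.
Qed.

Lemma mcoeff_basis_reduction g k : (g <= k)%O ->
  (<< g >> - T << g >>)@_k = (red T g && (g == k))%:R.
Proof.
move=> gk; case Tg: (red T g) => /=; last first.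
  by move/negbT/negPn/eqP: Tg => ->; rewrite subrr mcoeff0.
rewrite mcoeffB mcoeffU (@mcoeff_outdom _ _ (T << g >>) k) ?subr0 //.
by apply/negP => /(msupp_reduction_lt Tg); rewrite ltNge gk.
Qed.

Definition ker_comb c := \sum_(h <- msupp c) c@_h *: (<< h >> - T << h >>).

Definition ker_coord x := [malg h in msupp x => if red T h then x@_h else 0].

Lemma ker_coordE x h : (ker_coord x)@_h = if red T h then x@_h else 0.
Proof. by rewrite mcoeffE; case: msuppP => _; case: (red T h). Qed.

Lemma msupp_ker_coord x h :
  h \in msupp (ker_coord x) = red T h && (h \in msupp x).
Proof. by rewrite -!mcoeff_neq0 ker_coordE; case: (red T h); rewrite ?eqxx. Qed.

Lemma ker_coord_red x : {in msupp (ker_coord x), forall h, red T h}.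
Proof. by move=> h; rewrite msupp_ker_coord => /andP[]. Qed.

Lemma msupp_ker_coord_sub x : (msupp (ker_coord x) `<=` msupp x)%fset.
Proof. by apply/fsubsetP => h; rewrite msupp_ker_coord => /andP[]. Qed.

Lemma mcoeff_ker_comb c k : {in msupp c, forall h, red T h} ->
  (forall h, h \in msupp c -> (h <= k)%O) -> (ker_comb c)@_k = c@_k.
Proof.
move=> c_red c_le; rewrite raddf_sum /= [in RHS](monalgE c) raddf_sum /=.
apply: eq_big_seq => h hc; rewrite mcoeffZ mcoeff_basis_reduction ?c_le //.
by rewrite c_red // mcoeffU mulr_natr.
Qed.

Lemma is_lead_ker_comb c m : {in msupp c, forall h, red T h} ->
  is_lead c m -> is_lead (ker_comb c) m.
Proof.
move=> c_red [mc c_le].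
split; first by rewrite -mcoeff_neq0 mcoeff_ker_comb // mcoeff_neq0.
move=> k; case: (leP k m) => // mk; rewrite -mcoeff_neq0 mcoeff_ker_comb //.
  by rewrite mcoeff_neq0 => /c_le; rewrite leNgt mk.
by move=> h /c_le hm; exact: le_trans hm (ltW mk).
Qed.

Lemma ker_comb_coord x : T x = 0 -> ker_comb (ker_coord x) = x.
Proof.
move=> Tx; have x_sum : \sum_(h <- msupp x) x@_h *: (<< h >> - T << h >>) = x.
  rewrite (eq_bigr (fun h => x@_h *: << h >> - T (x@_h *: << h >>))) => [|h _].
    by rewrite sumrB -reduction_sum -monalgEscale Tx subr0.
  by rewrite scalerBr reductionZ.
rewrite -[RHS]x_sum /ker_comb.
rewrite (big_fset_incl _ (msupp_ker_coord_sub x)) => [|h _ /mcoeff_outdom ->];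
  last by rewrite scale0r.
apply: eq_bigr => h _; rewrite ker_coordE; case: ifP => // /negbT/negPn/eqP ->.
by rewrite subrr !scaler0.
Qed.

Lemma red_of_is_lead_ker v m : T v = 0 -> is_lead v m -> red T m.
Proof.
move=> Tv [mv v_le]; move: mv; rewrite -mcoeff_neq0 -{1}(ker_comb_coord Tv).
rewrite mcoeff_ker_comb ?ker_coordE => [||h /(fsubsetP (msupp_ker_coord_sub v))/v_le] //.
  by case: (red T m); rewrite ?eqxx.
exact: ker_coord_red.
Qed.

Lemma redP g : red T g <-> exists v, T v = 0 /\ is_lead v g.
Proof.
split=> [Tg|[v [Tv vg]]]; last exact: red_of_is_lead_ker Tv vg.
exists (<< g >> - T << g >>); split.
  by case: hT => _ idem _; rewrite reductionB idem subrr.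
split; first by rewrite -mcoeff_neq0 mcoeff_basis_reduction // Tg eqxx oner_neq0.
move=> k /(fsubsetP (msuppB_le _ _)); rewrite inE.
by case/orP=> [/msuppU_eq-> | /(msupp_reduction_lt Tg)/ltW].
Qed.

End ReductionOperator.

Section KernelInverse.
Context {K : fieldType} {d : Order.disp_t} {G : orderType d}.
Notation KG := {malg K[G]}.
Implicit Types (u v : KG) (g k m : G).
Hypothesis wfG : well_founded (fun x y : G => (x < y)%O).
Variable P : KG -> Prop.
Hypothesis P0 : P 0.
Hypothesis PZD : forall a u v, P u -> P v -> P (a *: u + v).

Definition leading g := exists v, P v /\ is_lead v g.

Definition normal_form u u' :=
  P (u - u') /\ forall k, k \in msupp u' -> ~ leading k.

Lemma normal_form0 : normal_form 0 0.
Proof. by split=> [|k]; rewrite ?subr0 ?msupp0. Qed.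

Lemma normal_form_uniq u a b : normal_form u a -> normal_form u b -> a = b.
Proof.
move=> [Pa a_nl] [Pb b_nl]; apply/eqP; rewrite -subr_eq0; apply/negP => /negP.
move=> /is_lead_exists [m abm]; have lead_m : leading m.
  exists (a - b); split=> //.
  have -> : a - b = (-1) *: (u - a) + (u - b) by rewrite scaleN1r opprB addrA subrK.
  exact: PZD.
move: abm.1 => /(fsubsetP (msuppB_le _ _)); rewrite inE.
by case/orP => [/a_nl | /b_nl].
Qed.

Lemma normal_form_step m u :
  (forall u1, (forall k, k \in msupp u1 -> (k < m)%O) ->
    exists u1', normal_form u1 u1' /\ forall k, k \in msupp u1' -> (k < m)%O) ->
  (forall k, k \in msupp u -> (k <= m)%O) ->
  exists u', normal_form u u' /\ forall k, k \in msupp u' -> (k <= m)%O.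
Proof.
move=> IH u_le; case: (classic (leading m)) => [[v [Pv [mv v_le]]] | not_lead].
  pose u1 := u - (u@_m / v@_m) *: v.
  have u1_lt : forall k, k \in msupp u1 -> (k < m)%O.
    apply: msupp_lt; last by rewrite mcoeffB mcoeffZ divfK ?subrr // mcoeff_neq0.
    move=> k /(fsubsetP (msuppB_le _ _)); rewrite inE => /orP[/u_le //|].
    by move/(fsubsetP (msuppZ_le _ _))/v_le.
  have [u1' [[Pu1 u1'_nl] u1'_lt]] := IH u1 u1_lt.
  exists u1'; split=> [|k /u1'_lt /ltW //]; split=> //.
  have -> : u - u1' = (u@_m / v@_m) *: v + (u1 - u1').
    by rewrite /u1 addrA [_ *: v + _]addrC subrK.
  exact: PZD.
pose u1 := u - << u@_m *g m >>.
have u1_lt : forall k, k \in msupp u1 -> (k < m)%O.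
  apply: msupp_lt; last by rewrite mcoeffB mcoeffUU subrr.
  move=> k /(fsubsetP (msuppB_le _ _)); rewrite inE => /orP[/u_le //|].
  by move/msuppU_eq->.
have [u1' [[Pu1 u1'_nl] u1'_lt]] := IH u1 u1_lt.
exists (u1' + << u@_m *g m >>); split; first split.
- by rewrite opprD addrA addrAC.
- move=> k /(fsubsetP (msuppD_le _ _)); rewrite inE => /orP[/u1'_nl //|].
  by move/msuppU_eq->.
- move=> k /(fsubsetP (msuppD_le _ _)); rewrite inE => /orP[/u1'_lt /ltW //|].
  by move/msuppU_eq->.
Qed.

Lemma normal_form_exists_lt m u : (forall k, k \in msupp u -> (k < m)%O) ->
  exists u', normal_form u u' /\ forall k, k \in msupp u' -> (k < m)%O.
Proof.
elim/(well_founded_induction wfG): m u => m IH u u_lt.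
have [->|/is_lead_exists [m1 [m1u u_le]]] := eqVneq u 0.
  by exists 0; split=> [|k]; rewrite ?msupp0 //; exact: normal_form0.
have [u' [nf_u u'_le]] := normal_form_step (IH m1 (u_lt _ m1u)) u_le.
by exists u'; split=> // k /u'_le km1; exact: le_lt_trans km1 (u_lt _ m1u).
Qed.

Lemma normal_form_exists u : exists u', normal_form u u'.
Proof.
have [->|/is_lead_exists [m [_ u_le]]] := eqVneq u 0.
  by exists 0; exact: normal_form0.
have [u' [nf_u _]] := normal_form_step (@normal_form_exists_lt m) u_le.
by exists u'.
Qed.

Definition nf u := epsilon (inhabits 0) (normal_form u).

Lemma nfP u : normal_form u (nf u).
Proof. exact: epsilon_spec (normal_form_exists u). Qed.

Lemma nf_eq u u' : normal_form u u' -> nf u = u'.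
Proof. exact: normal_form_uniq (nfP u). Qed.

Lemma msupp_nf_lt m u : (forall k, k \in msupp u -> (k < m)%O) ->
  forall k, k \in msupp (nf u) -> (k < m)%O.
Proof. by case/normal_form_exists_lt=> u' [/nf_eq ->]. Qed.

Lemma nf_basis g : vle (nf << g >>) << g >>.
Proof.
case: (classic (leading g)) => [[v [Pv [gv v_le]]] | not_lead]; last first.
  rewrite /vle (@nf_eq _ << g >>) ?eqxx ?orbT //.
  by split=> [|k /msuppU_eq->]; first by rewrite subrr.
pose u1 := << g >> - (v@_g)^-1 *: v.
have u1_lt : forall k, k \in msupp u1 -> (k < g)%O.
  apply: msupp_lt; last by rewrite mcoeffB mcoeffZ mcoeffUU mulVf ?subrr // mcoeff_neq0.
  move=> k /(fsubsetP (msuppB_le _ _)); rewrite inE.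
  by case/orP=> [/msuppU_eq-> | /(fsubsetP (msuppZ_le _ _))/v_le].
rewrite /vle (@nf_eq _ (nf u1)); first by rewrite (proj2 (vlt_basis _ _) (msupp_nf_lt u1_lt)).
have [Pu1 u1_nl] := nfP u1; split=> //.
have -> : << g >> - nf u1 = (v@_g)^-1 *: v + (u1 - nf u1).
  by rewrite /u1 addrA [_ *: v + _]addrC subrK.
exact: PZD.
Qed.

Lemma nf_reduction : is_reduction nf.
Proof.
split=> [a u v | v | g]; last exact: nf_basis.
- apply: nf_eq; have [[Pu u_nl] [Pv v_nl]] := (nfP u, nfP v); split.
    by rewrite opprD addrACA -scalerBr; exact: PZD.
  move=> k /(fsubsetP (msuppD_le _ _)); rewrite inE.
  by case/orP=> [/(fsubsetP (msuppZ_le _ _))/u_nl | /v_nl].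
- by apply: nf_eq; split; [rewrite subrr | exact: (nfP v).2].
Qed.

Lemma nf_eq0 v : nf v = 0 <-> P v.
Proof.
split=> [nf0 | Pv]; first by have := (nfP v).1; rewrite nf0 subr0.
by apply: nf_eq; split=> [|k]; rewrite ?subr0 ?msupp0.
Qed.

End KernelInverse.

Lemma ker_invP {K : fieldType} {d : Order.disp_t} {G : orderType d}
    (wfG : well_founded (fun x y : G => (x < y)%O)) (P : {malg K[G]} -> Prop) :
  P 0 -> (forall a u v, P u -> P v -> P (a *: u + v)) ->
  is_reduction (ker_inv P) /\ forall v, ker_inv P v = 0 <-> P v.
Proof.
move=> P0 PZD; have nf_spec : exists T, is_reduction T /\ forall v, T v = 0 <-> P v.
  by exists (nf P); split; [exact: nf_reduction | exact: nf_eq0].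
exact: (epsilon_spec (inhabits id) _ nf_spec).
Qed.

Lemma sum_nat_trunc (V : nmodType) (F : nat -> V) m n : (m <= n)%N ->
  (forall j, (m < j <= n)%N -> F j = 0) ->
  \sum_(1 <= j < n.+1) F j = \sum_(1 <= j < m.+1) F j.
Proof.
move=> mn F0; rewrite (@big_cat_nat _ _ _ m.+1) //= [X in _ + X]big1_seq ?addr0 //.
by move=> j; rewrite mem_index_iota => jn; apply: F0; lia.
Qed.

Section MeetAndJoin.
Context {K : fieldType} {d : Order.disp_t} {G : orderType d}.
Notation KG := {malg K[G]}.
Implicit Types (v : KG) (g : G) (T : nat -> KG -> KG).
Hypothesis wfG : well_founded (fun x y : G => (x < y)%O).

Definition ker_sum T k v := exists w : nat -> KG,
  (forall j, (1 <= j <= k)%N -> T j (w j) = 0) /\ v = \sum_(1 <= j < k.+1) w j.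

Lemma rmeet_uptoP T k : (forall j, (1 <= j <= k)%N -> is_reduction (T j)) ->
  is_reduction (rmeet_upto T k) /\ forall v, rmeet_upto T k v = 0 <-> ker_sum T k v.
Proof.
move=> hT; apply: ker_invP => // [|a _ _ [w1 [w1_ker ->]] [w2 [w2_ker ->]]].
  by exists (fun=> 0); split=> [j /hT/reduction0 | ]; rewrite ?big1.
exists (fun j => a *: w1 j + w2 j); split; last by rewrite big_split /= scaler_sumr.
move=> j jk; have hTj := hT j jk.
by rewrite reductionZD // w1_ker // w2_ker // scaler0 addr0.
Qed.

Lemma red_rjoin A B g : is_reduction A -> is_reduction B ->
  red (rjoin A B) g <-> exists v, [/\ A v = 0, B v = 0 & is_lead v g].
Proof.
move=> hA hB; have [J_red J_ker] : is_reduction (rjoin A B) /\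
    forall v, rjoin A B v = 0 <-> A v = 0 /\ B v = 0.
  apply: ker_invP => // [|a u v [Au Bu] [Av Bv]]; first by rewrite !reduction0.
  by rewrite !reductionZD // Au Bu Av Bv scaler0 addr0.
rewrite redP //; split=> [[v [/J_ker [Av Bv] vg]] | [v [Av Bv vg]]]; exists v => //.
by split=> //; apply/J_ker.
Qed.

Lemma red_rjoin_rmeet_upto T i g :
  (forall j, (1 <= j <= i.+1)%N -> is_reduction (T j)) ->
  red (rjoin (rmeet_upto T i) (T i.+1)) g <->
  exists v, [/\ ker_sum T i v, T i.+1 v = 0 & is_lead v g].
Proof.
move=> hT; have [U_red U_ker] : is_reduction (rmeet_upto T i) /\
    forall v, rmeet_upto T i v = 0 <-> ker_sum T i v.
  by apply: rmeet_uptoP => j /andP[j1 ji]; apply: hT; rewrite j1 ltnW.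
rewrite red_rjoin //; last by apply: hT; rewrite /= leqnn.
by split=> -[v [/U_ker Uv Tv vg]]; exists v.
Qed.

End MeetAndJoin.

Section LeadingTermsOfSyzygies.
Context {K : fieldType} {d : Order.disp_t} {G : orderType d}.
Notation KG := {malg K[G]}.
Variables (n : nat) (T : nat -> KG -> KG).
Hypothesis hT : forall j, (1 <= j <= n)%N -> is_reduction (T j).

Lemma kerF_coords_ker_coord w : in_kerF n T w ->
  kerF_coords n T w (fun j => ker_coord (T j) (w j)).
Proof.
move=> w_ker j jn; split; first exact: ker_coord_red.
exact/esym/(ker_comb_coord (hT jn) (w_ker j jn)).
Qed.

Lemma lt_syz_ker_sum i g : in_lt_syz n T i.+1 g ->
  (0 < i < n)%N /\ exists v, [/\ ker_sum T i v, T i.+1 v = 0 & is_lead v g].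
Proof.
case=> w [[w_ker w_sum] _ [c [w_c /andP[_ i_lt] c_g c_lead]]].
have w_above : forall j, (i.+1 < j <= n)%N -> w j = 0.
  move=> j ijn; have jn : (1 <= j <= n)%N by lia.
  have [_ ->] := w_c j jn; rewrite big_seq big1 // => h.
  by rewrite -mcoeff_neq0 => /(c_lead j h jn); lia.
have wi_lead : is_lead (w i.+1) g.
  have i_n : (1 <= i.+1 <= n)%N by lia.
  have [c_red ->] := w_c i.+1 i_n; apply: (is_lead_ker_comb (hT i_n) c_red).
  split=> [|h]; first by rewrite -mcoeff_neq0.
  by rewrite -mcoeff_neq0 => /(c_lead i.+1 h i_n) [|[_ //]]; rewrite ltnn.
have wi_sum : w i.+1 = - \sum_(1 <= j < i.+1) w j.
  move: w_sum; rewrite (sum_nat_trunc i_lt w_above) big_nat_recr //= addrC.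
  by move/eqP; rewrite addr_eq0 => /eqP.
split.
  rewrite i_lt andbT lt0n; apply: contraTneq wi_lead.1 => i0.
  by rewrite wi_sum i0 big_geq // oppr0 msupp0.
exists (w i.+1); split=> //; last exact: w_ker.
exists (fun j => - w j); split; last by rewrite wi_sum sumrN.
move=> j ji; have jn : (1 <= j <= n)%N by lia.
by rewrite (reductionN (hT jn)) w_ker ?oppr0 //; lia.
Qed.

Lemma ker_sum_lt_syz i g v : (i < n)%N ->
  ker_sum T i v -> T i.+1 v = 0 -> is_lead v g -> in_lt_syz n T i.+1 g.
Proof.
move=> i_lt [u [u_ker v_sum]] Tv vg.
pose w j := if (j <= i)%N then u j else if j == i.+1 then - v else 0.
have w_i : w i.+1 = - v by rewrite /w ltnn eqxx.
have w_ker : in_kerF n T w.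
  move=> j jn; rewrite /w; case: leqP => ji; first by apply: u_ker; lia.
  case: eqP => [ji1|_]; last exact: reduction0 (hT jn).
  by rewrite (reductionN (hT jn)) ji1 Tv oppr0.
have v_ne0 : v != 0 by apply: contraTneq vg.1 => ->; rewrite msupp0.
exists w; split; first split => //.
- rewrite (sum_nat_trunc i_lt) => [|j /andP[ij _]]; last by rewrite /w leqNgt ltnW // gtn_eqF.
  rewrite big_nat_recr //= w_i; apply/eqP; rewrite subr_eq0 v_sum.
  by apply/eqP/eq_big_nat => j; rewrite /w ltnS => /andP[_ ->].
- by exists i.+1; rewrite w_i oppr_eq0 v_ne0; split=> //; lia.
exists (fun j => ker_coord (T j) (w j)); split=> [||| j h jn].
- exact: kerF_coords_ker_coord.
- by rewrite /= i_lt.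
- rewrite ker_coordE (red_of_is_lead_ker (hT _) Tv vg) ?w_i; last by rewrite /= i_lt.
  by rewrite mcoeffN oppr_eq0 mcoeff_neq0 vg.1.
rewrite ker_coordE; case: (red (T j) h); last by rewrite eqxx.
rewrite /w; case: (leqP j i) => [ji _|_]; first by left; rewrite ltnS.
case: (eqVneq j i.+1) => [->|_]; last by rewrite mcoeff0 eqxx.
by rewrite mcoeffN oppr_eq0 mcoeff_neq0 => /vg.2; right.
Qed.

End LeadingTermsOfSyzygies.

Theorem mainTheorem6 (K : fieldType) (d : Order.disp_t) (G : orderType d)
  (wfG : well_founded (fun x y : G => (x < y)%O))
  (n : nat) (T : nat -> {malg K[G]} -> {malg K[G]})
  (hT : forall i, (1 <= i <= n)%N -> is_reduction (T i)) :
  forall (i : nat) (g : G),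
    in_lt_syz n T i g <->
    ((2 <= i <= n)%N /\ red (rjoin (rmeet_upto T i.-1) (T i)) g).
Proof.
move=> [|i] g; first by split=> [[w [_ _ [c [_ /andP[]]]]] | [/andP[]]].
have hT_le : (i < n)%N -> forall j, (1 <= j <= i.+1)%N -> is_reduction (T j).
  by move=> i_lt j ji; apply: hT; lia.
split=> [/(lt_syz_ker_sum hT) [/andP[i_gt0 i_lt] lt_v] | [/andP[_ i_lt]]].
  by split; [apply/andP | exact: (red_rjoin_rmeet_upto wfG _ (hT_le i_lt)).2].
by move/(red_rjoin_rmeet_upto wfG _ (hT_le i_lt)) => [v []]; exact: ker_sum_lt_syz.
Qed.
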